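(* Let $R$ be a ring and let $(P,Q,\psi)$ be an $R$-system satisfying Condition (FS) whose Cuntz–Pimsner ring $\mathcal{O}_{(P,Q,\psi)}$ is well-defined. Then $\mathcal{O}_{(P,Q,\psi)}$ is a unital ring that is strongly $\mathbb{Z}$-graded if and only if $\mathcal{O}_{(P,Q,\psi)}\cong_{\mathrm{gr}}\mathcal{O}_{(P',Q',\psi')}$ for some ring $R'$ and some $R'$-system $(P',Q',\psi')$ whose Cuntz–Pimsner ring is well-defined and such that: (a) $(P',Q',\psi')$ is a unital $R'$-system; (b) $(P',Q',\psi')$ satisfies Condition (FS'), and the Cuntz–Pimsner representation $(\iota^{CP}_{P'},\iota^{CP}_{Q'},\iota^{CP}_{R'},\mathcal{O}_{(P',Q',\psi')})$ is semi-full and faithful; (c) $\psi'$ is surjective.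
   Context: Rings are associative but not necessarily unital. A $\mathbb{Z}$-graded ring $S=\bigoplus_{i\in\mathbb{Z}}S_i$ has additive subgroups with $S_mS_n\subseteq S_{m+n}$ ($XY$ denoting the additive subgroup generated by products); it is strongly graded if $S_mS_n=S_{m+n}$ for all $m,n$. $\cong_{\mathrm{gr}}$ denotes graded ring isomorphism. An $R$-system is a triple $(P,Q,\psi)$ with $P,Q$ $R$-bimodules and $\psi:P\otimes_RQ\to R$ an $R$-bimodule homomorphism. It is unital if $R$ is a unital ring and $P,Q$ are unital $R$-bimodules (i.e. $1_R$ acts as identity on both sides). Put $P^{\otimes0}=Q^{\otimes0}=R$, $\psi_0(r\otimes r')=rr'$, $\psi_1=\psi$, and for $n>1$: $Q^{\otimes n}=Q^{\otimes(n-1)}\otimes_RQ$, $P^{\otimes n}=P\otimes_RP^{\otimes(n-1)}$, $\psi_n((p_1\otimes p_2)\otimes(q_2\otimes q_1))=\psi(p_1\psi_{n-1}(p_2\otimes q_2)\otimes q_1)$. A covariant representation of $(P,Q,\psi)$ is a tuple $(S,T,\sigma,B)$ with $B$ a ring, $S:P\to B$, $T:Q\to B$ additive maps, $\sigma:R\to B$ a ring homomorphism, such that $S(pr)=S(p)\sigma(r)$, $S(rp)=\sigma(r)S(p)$, $T(qr)=T(q)\sigma(r)$, $T(rq)=\sigma(r)T(q)$ and $\sigma(\psi(p\otimes q))=S(p)T(q)$. It is surjective if $B$ is generated as a ring by $\sigma(R)\cup S(P)\cup T(Q)$, and graded if it is surjective and $B$ carries a $\mathbb{Z}$-grading with $\sigma(R)\subseteq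 B_0$, $T(Q)\subseteq B_1$, $S(P)\subseteq B_{-1}$. For a graded covariant representation and $k\ge0$, $I^{(k)}_{\psi,\sigma}$ is the ideal of $B_0$ generated by $\{\sigma(\psi_k(p\otimes q)):p\in P^{\otimes k},q\in Q^{\otimes k}\}$; the representation is semi-full if $B_{-k}B_k=I^{(k)}_{\psi,\sigma}$ for all $k\ge0$. For $q\in Q,p\in P$ let $\theta_{q,p}:Q\to Q$, $x\mapsto q\psi(p\otimes x)$, and $\theta_{p,q}:P\to P$, $y\mapsto\psi(y\otimes q)p$. $\mathcal{F}_P(Q)$ (resp. $\mathcal{F}_Q(P)$) is the additive group generated by all $\theta_{q,p}$ (resp. $\theta_{p,q}$). Condition (FS): for all finite sets $\{q_i\}\subseteq Q$, $\{p_j\}\subseteq P$ there are $\Theta\in\mathcal{F}_P(Q)$, $\Phi\in\mathcal{F}_Q(P)$ with $\Theta(q_i)=q_i$, $\Phi(p_j)=p_j$. Condition (FS'): there exist $\Theta\in\mathcal{F}_P(Q)$, $\Phi\in\mathcal{F}_Q(P)$ with $\Theta(q)=q$, $\Phi(p)=p$ for all $q,p$. Let $\Delta:R\to\mathrm{End}(Q_R)$, $\Delta(r)(q)=rq$. Under (FS), for each covariant representation there is a unique ring homomorphism $\pi_{T,S}:\mathcal{F}_P(Q)\to B$ with $\pi_{T,S}(\theta_{q,p})=T(q)S(p)$. If $R$ is unital and $(P,Q,\psi)$ is unital and satisfies (FS'), then $\Delta(1_R)=\mathrm{id}_Q\in\mathcal{F}_P(Q)$, and a covariant representation is called faithful if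 $\pi_{T,S}(\Delta(1_R))=\sigma(1_R)$. The Toeplitz representation $(\iota_P,\iota_Q,\iota_R,\mathcal{T}_{(P,Q,\psi)})$ is the universal covariant representation; it is graded with $\mathcal{T}_i$ the additive group generated by the elements $\iota_Q^m(q)\iota_P^n(p)$ and $\iota_R(r)\iota_Q^m(q)\iota_P^n(p)$ with $q\in Q^{\otimes m},p\in P^{\otimes n}$, $m-n=i$ (here $\iota_Q^m(q_1\otimes\cdots\otimes q_m)=\iota_Q(q_1)\cdots\iota_Q(q_m)$, similarly $\iota_P^n$, $\iota^0=\iota_R$). Assume (FS), $\pi=\pi_{\iota_Q,\iota_P}$. An ideal $J\subseteq R$ is $\psi$-compatible if $\Delta(J)\subseteq\mathcal{F}_P(Q)$ and faithful if $J\cap\ker\Delta=\{0\}$. For $\psi$-compatible $J$, $\mathcal{T}(J)$ is the ideal of $\mathcal{T}_{(P,Q,\psi)}$ generated by $\{\iota_R(x)-\pi(\Delta(x)):x\in J\}$, $\mathcal{O}_{(P,Q,\psi)}(J)=\mathcal{T}_{(P,Q,\psi)}/\mathcal{T}(J)$ with quotient map $\rho$ and grading $\rho(\mathcal{T}_i)$, and $(\rho\iota_P,\rho\iota_Q,\rho\iota_R,\mathcal{O}(J))$ is the relative Cuntz–Pimsner representation. If there is a unique maximal $\psi$-compatible faithful ideal $J$, the Cuntz–Pimsner ring is (well-defined and equal to) $\mathcal{O}_{(P,Q,\psi)}=\mathcal{O}_{(P,Q,\psi)}(J)$, with Cuntz–Pimsner representation $(\iota^{CP}_P,\iota^{CP}_Q,\iota^{CP}_R,\mathcal{O}_{(P,Q,\psi)})$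 the corresponding relative representation. *)

From HB Require Import structures.
From mathcomp Require Import all_boot all_order all_algebra.
Set Implicit Arguments. Unset Strict Implicit. Unset Printing Implicit Defensive.
Import GRing.Theory.
Local Open Scope ring_scope.

Record nuRing := NuRing {
  nr_car :> zmodType;
  nr_mul : nr_car -> nr_car -> nr_car;
  nr_mulA : forall x y z, nr_mul x (nr_mul y z) = nr_mul (nr_mul x y) z;
  nr_mulDl : forall x y z, nr_mul (x + y) z = nr_mul x z + nr_mul y z;
  nr_mulDr : forall x y z, nr_mul x (y + z) = nr_mul x y + nr_mul x z }.
Arguments nr_mul {_} _ _.

Definition addmap (U V : zmodType) (f : U -> V) : Prop :=
  forall x y, f (x + y) = f x + f y.

Definition ringhom (A B : nuRing) (f : A -> B) : Prop :=
  addmap f /\ forall x y, f (nr_mul x y) = nr_mul (f x) (f y).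

Definition is_one (A : nuRing) (e : A) : Prop :=
  forall x, nr_mul e x = x /\ nr_mul x e = x.

Definition unital_ring (A : nuRing) : Prop := exists e : A, is_one e.

Definition subgroup (V : zmodType) (G : V -> Prop) : Prop :=
  G 0 /\ forall x y, G x -> G y -> G (x - y).

Definition add_span (V : zmodType) (A : V -> Prop) (x : V) : Prop :=
  forall G, subgroup G -> (forall y, A y -> G y) -> G x.

Definition prodset (B : nuRing) (X Y : B -> Prop) : B -> Prop :=
  add_span (fun z => exists x y, X x /\ Y y /\ z = nr_mul x y).

Definition subring (B : nuRing) (A : B -> Prop) : Prop :=
  subgroup A /\ forall x y, A x -> A y -> A (nr_mul x y).

Definition ring_span (B : nuRing) (G : B -> Prop) (x : B) : Prop :=
  forall A, subring A -> (forall y, G y -> A y) -> A x.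

Definition ideal (A : nuRing) (J : A -> Prop) : Prop :=
  subgroup J /\ forall r x, J x -> J (nr_mul r x) /\ J (nr_mul x r).

Record bimod (R : nuRing) := Bimod {
  bm_car :> zmodType;
  bm_l : R -> bm_car -> bm_car;
  bm_r : bm_car -> R -> bm_car;
  bm_lDr : forall r m n, bm_l r (m + n) = bm_l r m + bm_l r n;
  bm_lDl : forall r s m, bm_l (r + s) m = bm_l r m + bm_l s m;
  bm_rDl : forall m n r, bm_r (m + n) r = bm_r m r + bm_r n r;
  bm_rDr : forall m r s, bm_r m (r + s) = bm_r m r + bm_r m s;
  bm_lA : forall r s m, bm_l (nr_mul r s) m = bm_l r (bm_l s m);
  bm_rA : forall m r s, bm_r m (nr_mul r s) = bm_r (bm_r m r) s;
  bm_lr : forall r m s, bm_r (bm_l r m) s = bm_l r (bm_r m s) }.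
Arguments bm_l {_ _} _ _.
Arguments bm_r {_ _} _ _.

(* ---------- R-systems ----------
   psi : P (x)_R Q -> R, an R-bimodule map, is given (equivalently, by the
   universal property of the balanced tensor product) as a biadditive,
   R-balanced map P -> Q -> R, left R-linear in P and right R-linear in Q. *)
Record Rsystem (R : nuRing) := RSystem {
  sP : bimod R;
  sQ : bimod R;
  spsi : sP -> sQ -> R;
  spsiDl : forall p p' q, spsi (p + p') q = spsi p q + spsi p' q;
  spsiDr : forall p q q', spsi p (q + q') = spsi p q + spsi p q';
  spsi_bal : forall p r q, spsi (bm_r p r) q = spsi p (bm_l r q);
  spsi_l : forall r p q, spsi (bm_l r p) q = nr_mul r (spsi p q);
  spsi_r : forall p q r, spsi p (bm_r q r) = nr_mul (spsi p q) r }.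
Arguments spsi {_ _} _ _.

Section Sys.
Variables (R : nuRing) (X : Rsystem R).

(* element sum_i theta_{q_i,p_i} of F_P(Q), applied to x *)
Definition thetaQP (l : seq (sQ X * sP X)) (x : sQ X) : sQ X :=
  \sum_(c <- l) bm_r c.1 (spsi c.2 x).

(* element sum_i theta_{p_i,q_i} of F_Q(P), applied to y *)
Definition thetaPQ (l : seq (sP X * sQ X)) (y : sP X) : sP X :=
  \sum_(c <- l) bm_l (spsi y c.2) c.1.

Definition condFS : Prop :=
  forall (qs : seq (sQ X)) (ps : seq (sP X)),
    (exists l, forall q, q \in qs -> thetaQP l q = q) /\
    (exists l, forall p, p \in ps -> thetaPQ l p = p).

Definition condFS' : Prop :=
  (exists l, forall q, thetaQP l q = q) /\ (exists l, forall p, thetaPQ l p = p).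

Definition unital_system : Prop :=
  exists e : R, is_one e /\
    (forall p : sP X, bm_l e p = p /\ bm_r p e = p) /\
    (forall q : sQ X, bm_l e q = q /\ bm_r q e = q).

(* psi : P (x) Q -> R surjective: every r is a finite sum of psi(p_i (x) q_i) *)
Definition psi_surjective : Prop :=
  forall r : R, exists l : seq (sP X * sQ X), r = \sum_(c <- l) spsi c.1 c.2.

(* psi_k on elementary tensors (p_1 (x) ... (x) p_k) (x) (q_k (x) ... (x) q_1),
   ps = [p_1;...;p_k], qs = [q_1;...;q_k]:
   psi_k = psi(p_1 psi_{k-1}(..) (x) q_1) *)
Fixpoint psi_list (ps : seq (sP X)) (qs : seq (sQ X)) : R :=
  match ps, qs with
  | [:: p], [:: q] => spsi p q
  | p :: ps', q :: qs' => spsi (bm_r p (psi_list ps' qs')) q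
  | _, _ => 0
  end.

Definition psi_compatible (J : R -> Prop) : Prop :=
  forall x, J x -> exists l, forall q, bm_l x q = thetaQP l q.
Definition faithful_ideal (J : R -> Prop) : Prop :=
  forall x, J x -> (forall q : sQ X, bm_l x q = 0) -> x = 0.
Definition CFideal (J : R -> Prop) : Prop :=
  ideal J /\ psi_compatible J /\ faithful_ideal J.
Definition maxCFideal (J : R -> Prop) : Prop :=
  CFideal J /\
  forall J', CFideal J' -> (forall x, J x -> J' x) -> forall x, J' x -> J x.
Definition CP_well_defined : Prop :=
  exists J, maxCFideal J /\ forall J', maxCFideal J' -> forall x, J' x <-> J x.

Section Rep.
Variables (B : nuRing) (S : sP X -> B) (T : sQ X -> B) (sg : R -> B).

Definition covrep : Prop :=
  addmap S /\ addmap T /\ ringhom sg /\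
  (forall p r, S (bm_r p r) = nr_mul (S p) (sg r)) /\
  (forall r p, S (bm_l r p) = nr_mul (sg r) (S p)) /\
  (forall q r, T (bm_r q r) = nr_mul (T q) (sg r)) /\
  (forall r q, T (bm_l r q) = nr_mul (sg r) (T q)) /\
  (forall p q, sg (spsi p q) = nr_mul (S p) (T q)).

(* pi_{T,S}(Theta) = b, where Theta = sum theta_{q_i,p_i} (well defined
   under (FS)) *)
Definition pi_is (Theta : sQ X -> sQ X) (b : B) : Prop :=
  forall l, (forall q, Theta q = thetaQP l q) ->
    b = \sum_(c <- l) nr_mul (T c.1) (S c.2).

Definition surjective_rep : Prop :=
  forall b, ring_span (fun y => (exists r, y = sg r) \/ (exists p, y = S p)
                               \/ (exists q, y = T q)) b.

Definition grading (Bi : int -> B -> Prop) : Prop :=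
  (forall i, subgroup (Bi i)) /\
  (forall m n x y, Bi m x -> Bi n y -> Bi (m + n) (nr_mul x y)) /\
  (forall b, exists (s : seq int) (f : int -> B),
      uniq s /\ (forall i, Bi i (f i)) /\ b = \sum_(i <- s) f i) /\
  (forall (s : seq int) (f : int -> B), uniq s -> (forall i, Bi i (f i)) ->
      \sum_(i <- s) f i = 0 -> forall i, i \in s -> f i = 0).

Definition graded_rep (Bi : int -> B -> Prop) : Prop :=
  covrep /\ surjective_rep /\ grading Bi /\
  (forall r, Bi 0 (sg r)) /\ (forall q, Bi 1 (T q)) /\ (forall p, Bi (-1) (S p)).

(* generators of I^(k)_{psi,sigma} *)
Definition Igens (k : nat) (y : B) : Prop :=
  if k is 0 then exists r r' : R, y = sg (nr_mul r r')
  else exists ps qs, size ps = k /\ size qs = k /\ y = sg (psi_list ps qs).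

Definition Ik (Bi : int -> B -> Prop) (k : nat) (x : B) : Prop :=
  forall I : B -> Prop,
    subgroup I -> (forall y, I y -> Bi 0 y) ->
    (forall a y, Bi 0 a -> I y -> I (nr_mul a y) /\ I (nr_mul y a)) ->
    (forall y, Igens k y -> I y) -> I x.

Definition semi_full (Bi : int -> B -> Prop) : Prop :=
  forall (k : nat) x, prodset (Bi (- (k%:Z))) (Bi (k%:Z)) x <-> Ik Bi k x.

(* faithful: pi_{T,S}(Delta(1_R)) = sigma(1_R) *)
Definition faithful_rep : Prop :=
  forall e : R, is_one e -> pi_is (fun q => bm_l e q) (sg e).

(* relations of O(J): sigma(x) = pi_{T,S}(Delta(x)) for x in J *)
Definition J_relations (J : R -> Prop) : Prop :=
  forall x, J x -> pi_is (fun q => bm_l x q) (sg x).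

End Rep.

(* (S,T,sg,B) with grading Bi is (isomorphic to) the relative Cuntz--Pimsner
   representation for J: it is graded, satisfies the J-relations, and is
   universal among covariant representations satisfying them. *)
Definition rel_CP_rep (J : R -> Prop) (B : nuRing) (S : sP X -> B)
    (T : sQ X -> B) (sg : R -> B) (Bi : int -> B -> Prop) : Prop :=
  graded_rep S T sg Bi /\ J_relations S T sg J /\
  forall (B' : nuRing) (S' : sP X -> B') (T' : sQ X -> B') (sg' : R -> B'),
    covrep S' T' sg' -> J_relations S' T' sg' J ->
    exists phi : B -> B', ringhom phi /\
      (forall p, phi (S p) = S' p) /\ (forall q, phi (T q) = T' q) /\
      (forall r, phi (sg r) = sg' r).

Definition CP_rep (B : nuRing) (S : sP X -> B) (T : sQ X -> B) (sg : R -> B)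
    (Bi : int -> B -> Prop) : Prop :=
  exists J, maxCFideal J /\ rel_CP_rep J S T sg Bi.

End Sys.

Definition strongly_graded (B : nuRing) (Bi : int -> B -> Prop) : Prop :=
  forall m n x, prodset (Bi m) (Bi n) x <-> Bi (m + n) x.

Definition graded_iso (B : nuRing) (Bi : int -> B -> Prop)
    (B' : nuRing) (Bi' : int -> B' -> Prop) : Prop :=
  exists phi : B -> B', ringhom phi /\ bijective phi /\
    forall i x, Bi i x <-> Bi' i (phi x).

From HB Require Import structures.
From mathcomp Require Import all_boot all_order all_algebra.
From mathcomp Require Import zify.
From Stdlib Require Import ClassicalEpsilon.
Set Implicit Arguments. Unset Strict Implicit. Unset Printing Implicit Defensive.
Import GRing.Theory.
Local Open Scope ring_scope.

(* Reverse direction.  Let (P',Q',psi') be unital with (FS') and psi' onto,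
   and let B' be its Cuntz-Pimsner ring.  The image e of 1_R' is an identity
   of B' (it fixes all generators); faithfulness with (FS') puts e in
   B'_1B'_{-1}, and surjectivity of psi' puts e in B'_{-1}B'_1.  A graded
   ring with such an identity is strongly graded (unit_prodset: e lies in
   every B_kB_{-k}).  Both properties pass back along the graded isomorphism.

   Forward direction.  Let B be unital and strongly graded.  Its identity
   has a degree-0 component which is again an identity (unit_comp0), hence
   expansions e = sum x_i y_i = sum y'_j x'_j with x, x' in B_1 and y, y' in
   B_{-1}.  We show that B, with the inclusions, is the Cuntz-Pimsner
   representation of the B_0-system (B_{-1}, B_1, multiplication): it is
   unital, satisfies (FS') and psi is onto; B_0 itself is the unique maximal
   psi-compatible faithful ideal; the representation is graded, faithful and
   semi-full; and it is universal, the extension of a representation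
   (S,T,sigma) being phi(b) = sum T(x_i1)...T(x_in) sigma(y_in...y_i1 b) on
   B_n (symmetrically with S on B_{-n}), which is multiplicative by induction
   on degrees.  So B is its own model, via the identity isomorphism. *)

Local Notation "x ⋆ y" := (nr_mul x y) (at level 40, left associativity).

Section AdditiveMaps.
Variables (U V : zmodType) (f : U -> V).
Hypothesis hf : addmap f.

Lemma addmap0 : f 0 = 0.
Proof. by apply: (addIr (f 0)); rewrite -hf !add0r. Qed.

Lemma addmapN x : f (- x) = - f x.
Proof. by apply: (addIr (f x)); rewrite -hf !addNr addmap0. Qed.

Lemma addmap_sum (I : Type) (l : seq I) (F : I -> U) :
  f (\sum_(i <- l) F i) = \sum_(i <- l) f (F i).
Proof. by elim: l => [|a l IH]; rewrite ?big_nil ?addmap0 // !big_cons hf IH. Qed.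
End AdditiveMaps.

Section NuRingArith.
Variable B : nuRing.
Implicit Types x y z : B.

Lemma addmap_mull x : addmap (nr_mul x).
Proof. exact: nr_mulDr. Qed.
Lemma addmap_mulr y : addmap (nr_mul^~ y).
Proof. by move=> a b; apply: nr_mulDl. Qed.

Lemma nmul0r x : 0 ⋆ x = 0. Proof. exact: (addmap0 (addmap_mulr x)). Qed.
Lemma nmulr0 x : x ⋆ 0 = 0. Proof. exact: (addmap0 (addmap_mull x)). Qed.
Lemma nmulNr x y : (- x) ⋆ y = - (x ⋆ y). Proof. exact: (addmapN (addmap_mulr y)). Qed.
Lemma nmulBl x y z : (x - y) ⋆ z = x ⋆ z - y ⋆ z.
Proof. by rewrite nr_mulDl nmulNr. Qed.
Lemma nmulBr x y z : z ⋆ (x - y) = z ⋆ x - z ⋆ y.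
Proof. by rewrite nr_mulDr (addmapN (addmap_mull z)). Qed.
Lemma nmul_suml (I : Type) (l : seq I) (F : I -> B) y :
  (\sum_(i <- l) F i) ⋆ y = \sum_(i <- l) F i ⋆ y.
Proof. exact: (addmap_sum (addmap_mulr y)). Qed.
Lemma nmul_sumr (I : Type) (l : seq I) (F : I -> B) y :
  y ⋆ (\sum_(i <- l) F i) = \sum_(i <- l) y ⋆ F i.
Proof. exact: (addmap_sum (addmap_mull y)). Qed.
End NuRingArith.

Section Subgroups.
Variables (V : zmodType) (G : V -> Prop).
Hypothesis hG : subgroup G.

Lemma subgroup0 : G 0. Proof. by case: hG. Qed.
Lemma subgroupN x : G x -> G (- x).
Proof. by case: hG => G0 GB /(GB _ _ G0); rewrite sub0r. Qed.
Lemma subgroupD x y : G x -> G y -> G (x + y).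
Proof. by case: hG => _ GB Gx /subgroupN /(GB _ _ Gx); rewrite opprK. Qed.
Lemma subgroupB x y : G x -> G y -> G (x - y).
Proof. by move=> Gx /subgroupN; apply: subgroupD. Qed.
Lemma subgroup_sum (I : eqType) (l : seq I) (F : I -> V) :
  (forall i, i \in l -> G (F i)) -> G (\sum_(i <- l) F i).
Proof.
elim: l => [|a l IH] GF; first by rewrite big_nil; apply: subgroup0.
rewrite big_cons; apply: subgroupD; first by apply: GF; rewrite inE eqxx.
by apply: IH => i il; apply: GF; rewrite inE il orbT.
Qed.

Lemma subgroup_preim (U : zmodType) (f : U -> V) :
  addmap f -> subgroup (fun z => G (f z)).
Proof.
move=> hf; split; first by rewrite addmap0 //; apply: subgroup0.
by move=> x y Gx Gy; rewrite hf addmapN //; apply: subgroupB.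
Qed.
End Subgroups.

Lemma add_span_subgroup (V : zmodType) (A : V -> Prop) : subgroup (add_span A).
Proof.
split; first by move=> G hG _; apply: subgroup0.
by move=> x y hx hy G hG AG; apply: subgroupB => //; [apply: hx | apply: hy].
Qed.

Section ProductSets.
Variable B : nuRing.
Implicit Types X Y G : B -> Prop.

Lemma prodset_in X Y x y : X x -> Y y -> prodset X Y (x ⋆ y).
Proof. by move=> Xx Yy G _; apply; exists x, y. Qed.

Lemma prodset_ind X Y G z : subgroup G ->
  (forall x y, X x -> Y y -> G (x ⋆ y)) -> prodset X Y z -> G z.
Proof. by move=> hG H; apply => // w [x [y [Xx [Yy ->]]]]; apply: H. Qed.

Lemma prodset_sum X Y (I : eqType) (l : seq I) (F G : I -> B) :
  (forall c, X (F c) /\ Y (G c)) -> prodset X Y (\sum_(c <- l) F c ⋆ G c).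
Proof.
move=> H; apply: (subgroup_sum (add_span_subgroup _)) => c _.
by have [? ?] := H c; apply: prodset_in.
Qed.

End ProductSets.

Lemma prodset_map (B B' : nuRing) (g : B -> B') (X Y : B -> Prop) (X' Y' : B' -> Prop) z :
  ringhom g -> (forall x, X x -> X' (g x)) -> (forall y, Y y -> Y' (g y)) ->
  prodset X Y z -> prodset X' Y' (g z).
Proof.
move=> [ga gm] gX gY; apply: (prodset_ind (G := fun z => prodset X' Y' (g z))).
  exact: (subgroup_preim (add_span_subgroup _) ga).
by move=> x y Xx Yy; rewrite gm; exact: prodset_in (gX _ Xx) (gY _ Yy).
Qed.

Section GradedRing.
Variables (B : nuRing) (Bi : int -> B -> Prop).
Hypothesis hgr : grading Bi.

Lemma grade_sub i : subgroup (Bi i). Proof. by case: hgr. Qed.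

Lemma grade_mul m n k x y : m + n = k -> Bi m x -> Bi n y -> Bi k (x ⋆ y).
Proof. by case: hgr => _ [hmul _] <-; apply: hmul. Qed.

Lemma prodset_graded m n z : prodset (Bi m) (Bi n) z -> Bi (m + n) z.
Proof. by apply: prodset_ind; [apply: grade_sub | move=> x y; apply: grade_mul]. Qed.

Section StrongFromUnit.
Variable e : B.
Hypothesis he : is_one e.
Hypothesis he1 : prodset (Bi 1) (Bi (-1)) e.
Hypothesis he2 : prodset (Bi (-1)) (Bi 1) e.

Lemma unit_in_B0 : Bi 0 e.
Proof. by have := prodset_graded he1; rewrite addrN. Qed.

(* x y = x e y and e in B_kB_{-k} give x y in B_{d+k}B_{-(d+k)} *)
Lemma unit_prodset_add d k : prodset (Bi d) (Bi (- d)) e ->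
  prodset (Bi k) (Bi (- k)) e -> prodset (Bi (d + k)) (Bi (- (d + k))) e.
Proof.
move=> hd hk; apply: (prodset_ind (add_span_subgroup _) _ hd) => x y Xx Yy.
have -> : x ⋆ y = x ⋆ e ⋆ y by have [_ ->] := he x.
apply: (prodset_ind (G := fun z => prodset (Bi (d + k)) (Bi (- (d + k))) (x ⋆ z ⋆ y))) hk.
  apply: (subgroup_preim (add_span_subgroup _)) => a b.
  by rewrite nr_mulDr nr_mulDl.
move=> a b Xa Yb; rewrite nr_mulA -(nr_mulA (x ⋆ a)).
by apply: prodset_in; apply: grade_mul; eauto; lia.
Qed.

Lemma unit_prodset k : prodset (Bi k) (Bi (- k)) e.
Proof.
have e0 : prodset (Bi 0) (Bi (- 0)) e.
  by rewrite oppr0; have [<- _] := he e; apply: prodset_in; apply: unit_in_B0.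
(* the cases 0 and -1 are closed by e0 and he2 *)
case: k => n; elim: n => [|n IH] //.
- have -> : Posz n.+1 = 1 + n by lia.
  exact: (unit_prodset_add he1 IH).
- have -> : Negz n.+1 = -1 + Negz n by rewrite !NegzE; lia.
  exact: (unit_prodset_add he2 IH).
Qed.

Lemma strongly_graded_of_unit : strongly_graded Bi.
Proof.
move=> m n x; split; first exact: prodset_graded.
move=> hx; have -> : x = e ⋆ x by have [-> _] := he x.
have := unit_prodset (k := m).
apply: (prodset_ind (G := fun z => prodset (Bi m) (Bi n) (z ⋆ x))).
  exact: (subgroup_preim (add_span_subgroup _) (addmap_mulr x)).
move=> a b Xa Yb; rewrite -nr_mulA; apply: prodset_in => //.
by apply: grade_mul Yb hx; lia.
Qed.
End StrongFromUnit.
End GradedRing.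

Section CovariantRep.
Variables (R : nuRing) (X : Rsystem R) (B : nuRing).
Variables (S : sP X -> B) (T : sQ X -> B) (sg : R -> B).
Hypothesis hcov : covrep S T sg.

Lemma rep_S_add : addmap S. Proof. by case: hcov. Qed.
Lemma rep_T_add : addmap T. Proof. by case: hcov => _ []. Qed.
Lemma rep_sg_hom : ringhom sg. Proof. by case: hcov => _ [_ []]. Qed.
Lemma rep_Sr p r : S (bm_r p r) = S p ⋆ sg r. Proof. by case: hcov => _ [_ [_ []]]. Qed.
Lemma rep_Sl r p : S (bm_l r p) = sg r ⋆ S p. Proof. by case: hcov => _ [_ [_ [_ []]]]. Qed.
Lemma rep_Tr q r : T (bm_r q r) = T q ⋆ sg r. Proof. by case: hcov => _ [_ [_ [_ [_ []]]]]. Qed.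
Lemma rep_Tl r q : T (bm_l r q) = sg r ⋆ T q. Proof. by case: hcov => _ [_ [_ [_ [_ [_ []]]]]]. Qed.
Lemma rep_psi p q : sg (spsi p q) = S p ⋆ T q.
Proof. by case: hcov => _ [_ [_ [_ [_ [_ [_ ->]]]]]]. Qed.

(* In a surjective representation of a unital system, sigma(1_R) is an
   identity: it acts trivially on all generators. *)
Lemma rep_unit e : surjective_rep S T sg -> is_one e ->
  (forall p : sP X, bm_l e p = p /\ bm_r p e = p) ->
  (forall q : sQ X, bm_l e q = q /\ bm_r q e = q) -> is_one (sg e).
Proof.
move=> hsurj he hP hQ x; apply: (hsurj x (fun b => sg e ⋆ b = b /\ b ⋆ sg e = b)).
  split; first split.
  - by rewrite nmulr0 nmul0r.
  - by move=> a b [h1 h2] [h3 h4]; rewrite nmulBr nmulBl h1 h2 h3 h4.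
  - by move=> a b [h1 h2] [h3 h4]; rewrite nr_mulA h1 -nr_mulA h4.
have [_ sgM] := rep_sg_hom.
move=> y [[r ->]|[[p ->]|[q ->]]].
- by rewrite -!sgM; have [-> ->] := he r.
- by rewrite -rep_Sr -rep_Sl; have [-> ->] := hP p.
- by rewrite -rep_Tr -rep_Tl; have [-> ->] := hQ q.
Qed.

(* every sigma(psi(p,q)) lies in S(P)T(Q), so surjectivity of psi puts
   all of sigma(R) in S(P)T(Q) *)
Lemma rep_psi_surj (XP XQ : B -> Prop) r : psi_surjective X ->
  (forall p, XP (S p)) -> (forall q, XQ (T q)) -> prodset XP XQ (sg r).
Proof.
move=> hps hSP hTQ; have [l ->] := hps r.
rewrite (addmap_sum rep_sg_hom.1).
under eq_bigr => c _ do rewrite rep_psi.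
by apply: prodset_sum.
Qed.

(* For a faithful representation of a system with (FS'), Theta = sum theta
   acting as the identity gives sigma(1_R) = sum T(q_i)S(p_i). *)
Lemma rep_faithful_FS' (XQ XP : B -> Prop) e : faithful_rep S T sg -> condFS' X ->
  is_one e -> (forall q : sQ X, bm_l e q = q) ->
  (forall q, XQ (T q)) -> (forall p, XP (S p)) -> prodset XQ XP (sg e).
Proof.
move=> hf [[l hl] _] he heQ hTQ hSP.
rewrite (hf e he l); last by move=> q; rewrite hl heQ.
exact: prodset_sum.
Qed.
End CovariantRep.

Lemma CP_unital_strongly_graded (R : nuRing) (X : Rsystem R) (B : nuRing)
    (S : sP X -> B) (T : sQ X -> B) (sg : R -> B) (Bi : int -> B -> Prop) :
  unital_system X -> condFS' X -> psi_surjective X ->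
  graded_rep S T sg Bi -> faithful_rep S T sg ->
  unital_ring B /\ strongly_graded Bi.
Proof.
move=> [e [he [hP hQ]]] hfs hps [hcov [hsurj [hgr [_ [hT hS]]]]] hf.
have hE := rep_unit hcov hsurj he hP hQ.
split; first by exists (sg e).
apply: (strongly_graded_of_unit hgr hE).
- apply: (rep_faithful_FS' (XQ := Bi 1) (XP := Bi (-1)) hf hfs he) => //.
  by move=> q; have [] := hQ q.
- exact: (rep_psi_surj (XP := Bi (-1)) (XQ := Bi 1) hcov).
Qed.

Lemma graded_iso_reflect (B B' : nuRing) (Bi : int -> B -> Prop)
    (Bi' : int -> B' -> Prop) :
  grading Bi -> graded_iso Bi Bi' ->
  unital_ring B' /\ strongly_graded Bi' -> unital_ring B /\ strongly_graded Bi.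
Proof.
move=> hgr [phi [[phiA phiM] [[g gphi phig] hdeg]]] [[e' he'] hsg'].
have hg : ringhom g.
  split=> x y; rewrite -{1}(phig x) -{1}(phig y).
    by rewrite -phiA gphi.
  by rewrite -phiM gphi.
have gdeg i y : Bi' i y -> Bi i (g y) by rewrite hdeg phig.
split.
  exists (g e') => x; rewrite -(gphi x) -!hg.2; by have [-> ->] := he' (phi x).
move=> m n x; split; first exact: prodset_graded.
rewrite hdeg -hsg' -{2}(gphi x) => hx.
exact: prodset_map hg (gdeg m) (gdeg n) hx.
Qed.

Local Notation cid := constructive_indefinite_description.

Lemma int_ind_sym (P : int -> Prop) : P 0 ->
  (forall n : nat, P n%:Z -> P (n.+1)%:Z) ->
  (forall n : nat, P (- n%:Z) -> P (- (n.+1)%:Z)) -> forall k, P k.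
Proof.
move=> h0 hp hn; case=> n; first by elim: n.
rewrite NegzE; elim: n => [|n IH]; first by apply: (hn 0%N); rewrite oppr0.
exact: hn.
Qed.

Lemma sum_extend (V : zmodType) (s u : seq int) (F : int -> V) :
  uniq s -> uniq u -> {subset s <= u} ->
  \sum_(i <- u) (if i \in s then F i else 0) = \sum_(i <- s) F i.
Proof.
move=> us uu su; rewrite -big_mkcond -big_filter; apply: perm_big.
apply: uniq_perm; [exact: filter_uniq | exact: us |].
by move=> i; rewrite mem_filter; case: (boolP (i \in s)) => //= /su ->.
Qed.

(* Homogeneous components of an element of a Z-graded ring: comp i b is the
   degree-i part of b, chosen from some decomposition; it is independent of
   the decomposition since the sum (+)_i B_i is direct. *)
Section Components.
Variables (B : nuRing) (Bi : int -> B -> Prop).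
Hypothesis hgr : grading Bi.

Let Bsub := grade_sub hgr.

Definition decomposition (b : B) (sf : seq int * (int -> B)) : Prop :=
  uniq sf.1 /\ (forall i, Bi i (sf.2 i)) /\ b = \sum_(i <- sf.1) sf.2 i.

Lemma decomposition_exists b : exists sf, decomposition b sf.
Proof. by case: hgr => _ [_ [/(_ b) [s [f hsf]] _]]; exists (s, f). Qed.

Definition dec (b : B) : seq int * (int -> B) := proj1_sig (cid _ (decomposition_exists b)).
Lemma decP b : decomposition b (dec b).
Proof. exact: proj2_sig (cid _ (decomposition_exists b)). Qed.

Definition support (b : B) : seq int := (dec b).1.
Definition comp (i : int) (b : B) : B := if i \in support b then (dec b).2 i else 0.

Lemma support_uniq b : uniq (support b). Proof. by case: (decP b). Qed.

Lemma comp_hom i b : Bi i (comp i b).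
Proof.
rewrite /comp; case: ifP => _; first by case: (decP b) => _ [].
exact: (subgroup0 (Bsub i)).
Qed.

Lemma comp_out i b : i \notin support b -> comp i b = 0.
Proof. by rewrite /comp => /negbTE ->. Qed.

Lemma comp_sum_over b (u : seq int) : uniq u -> {subset support b <= u} ->
  \sum_(i <- u) comp i b = b.
Proof.
move=> uu su; rewrite /comp sum_extend //; last exact: support_uniq.
by case: (decP b) => _ [].
Qed.

Lemma comp_sum b : \sum_(i <- support b) comp i b = b.
Proof. exact: comp_sum_over (support_uniq b) _. Qed.

Lemma decomposition_unique (s t : seq int) (f g : int -> B) : uniq s -> uniq t ->
  (forall i, Bi i (f i)) -> (forall i, Bi i (g i)) ->
  \sum_(i <- s) f i = \sum_(i <- t) g i ->
  forall i, (if i \in s then f i else 0) = (if i \in t then g i else 0).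
Proof.
move=> us ut hf hg hst i.
set u := undup (s ++ t).
have uu : uniq u by apply: undup_uniq.
have su : {subset s <= u} by move=> j js; rewrite mem_undup mem_cat js.
have tu : {subset t <= u} by move=> j jt; rewrite mem_undup mem_cat jt orbT.
set h := fun j => (if j \in s then f j else 0) - (if j \in t then g j else 0).
have hh j : Bi j (h j).
  by apply: (subgroupB (Bsub j)); case: ifP => _; rewrite ?hf ?hg //; apply: subgroup0.
have hs : \sum_(j <- u) h j = 0 by rewrite sumrB !sum_extend // hst subrr.
case iu : (i \in u).
  apply/eqP; rewrite -subr_eq0; apply/eqP.
  by case: hgr => _ [_ [_ /(_ u h uu hh hs i iu)]].
have /negbTE -> : i \notin s by apply/negP => /su; rewrite iu.
by have /negbTE -> : i \notin t by apply/negP => /tu; rewrite iu.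
Qed.

Lemma comp_dec b (s : seq int) (f : int -> B) : uniq s -> (forall i, Bi i (f i)) ->
  b = \sum_(i <- s) f i -> forall i, comp i b = if i \in s then f i else 0.
Proof.
move=> us hf hb i; case: (decP b) => ub [hfb hbs].
by apply: decomposition_unique => //; rewrite -hb.
Qed.

Lemma comp_homog n h : Bi n h -> forall i, comp i h = if i == n then h else 0.
Proof.
move=> hh i; rewrite (@comp_dec h [:: n] (fun j => if j == n then h else 0)) //.
- by rewrite inE; case: (i == n).
- by move=> j; case: eqP => [->|_] //; apply: (subgroup0 (Bsub j)).
- by rewrite big_seq1 eqxx.
Qed.

Lemma comp_add i a b : comp i (a + b) = comp i a + comp i b.
Proof.
set s := undup (support a ++ support b).
have inA j : j \in support a -> j \in s by rewrite mem_undup mem_cat => ->.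
have inB j : j \in support b -> j \in s by rewrite mem_undup mem_cat orbC => ->.
rewrite (@comp_dec (a + b) s (fun j => comp j a + comp j b)) ?undup_uniq //.
- case: ifP => // /negbT si; rewrite !comp_out ?addr0 //.
  + by apply: contra si; apply: inB.
  + by apply: contra si; apply: inA.
- by move=> j; apply: (subgroupD (Bsub j)); apply: comp_hom.
- by rewrite big_split /= !comp_sum_over ?undup_uniq.
Qed.

Lemma comp_mulr m x a k : Bi m x -> comp k (a ⋆ x) = comp (k - m) a ⋆ x.
Proof.
move=> hx; set t : seq int := [seq i + m | i <- support a].
have ut : uniq t by rewrite map_inj_uniq ?support_uniq // => i j /addIr.
rewrite (@comp_dec _ t (fun j => comp (j - m) a ⋆ x)) //.
- case: ifP => // /negbT kt; rewrite comp_out ?nmul0r //.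
  by apply: contra kt => km; apply/mapP; exists (k - m); rewrite // subrK.
- by move=> j; apply: (grade_mul hgr _ (comp_hom _ a) hx); rewrite subrK.
- rewrite big_map -{1}(comp_sum a) nmul_suml.
  by apply: eq_bigr => i _; rewrite addrK.
Qed.

Lemma comp_mull m x a k : Bi m x -> comp k (x ⋆ a) = x ⋆ comp (k - m) a.
Proof.
move=> hx; set t : seq int := [seq m + i | i <- support a].
have ut : uniq t by rewrite map_inj_uniq ?support_uniq // => i j /addrI.
rewrite (@comp_dec _ t (fun j => x ⋆ comp (j - m) a)) //.
- case: ifP => // /negbT kt; rewrite comp_out ?nmulr0 //.
  by apply: contra kt => km; apply/mapP; exists (k - m); rewrite // addrC subrK.
- by move=> j; apply: (grade_mul hgr _ hx (comp_hom _ a)); rewrite addrC subrK.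
- rewrite big_map -{1}(comp_sum a) nmul_sumr.
  by apply: eq_bigr => i _; rewrite (addrC m i) addrK.
Qed.

Lemma unit_comp0 e0 : is_one e0 -> is_one (comp 0 e0).
Proof.
move=> he0 b; rewrite -(comp_sum b) nmul_sumr nmul_suml.
split; apply: eq_bigr => i _; have hb := comp_hom i b.
- have [eb _] := he0 (comp i b).
  by have := comp_mulr e0 i hb; rewrite eb (comp_homog hb) eqxx subrr => /esym.
- have [_ be] := he0 (comp i b).
  by have := comp_mull e0 i hb; rewrite be (comp_homog hb) eqxx subrr => /esym.
Qed.
End Components.

(* A subgroup G of an abelian group, as an abelian group in its own right.
   Membership is made boolean by classical choice so that the carrier is a
   subtype with decidable equality. *)
Definition classic_bool (P : Prop) : bool :=
  if excluded_middle_informative P then true else false.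
Lemma classic_boolP (P : Prop) : classic_bool P <-> P.
Proof. by rewrite /classic_bool; case: excluded_middle_informative. Qed.

Section SubgroupType.
Variables (V : zmodType) (G : V -> Prop).
Hypothesis hG : subgroup G.

Definition subgroup_type of subgroup G := {x : V | classic_bool (G x)}.
HB.instance Definition _ := Choice.on (subgroup_type hG).

Definition sg_mk x (Gx : G x) : subgroup_type hG := exist _ x ((classic_boolP _).2 Gx).
Lemma sg_valP (a : subgroup_type hG) : G (val a).
Proof. exact: (classic_boolP _).1 (valP a). Qed.

Definition sg_zero : subgroup_type hG := sg_mk (subgroup0 hG).
Definition sg_add (a b : subgroup_type hG) := sg_mk (subgroupD hG (sg_valP a) (sg_valP b)).
Definition sg_opp (a : subgroup_type hG) := sg_mk (subgroupN hG (sg_valP a)).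
Lemma sg_addA : associative sg_add.
Proof. by move=> a b c; apply: val_inj; rewrite /= addrA. Qed.
Lemma sg_addC : commutative sg_add.
Proof. by move=> a b; apply: val_inj; rewrite /= addrC. Qed.
Lemma sg_add0 : left_id sg_zero sg_add.
Proof. by move=> a; apply: val_inj; rewrite /= add0r. Qed.
Lemma sg_addN : left_inverse sg_zero sg_opp sg_add.
Proof. by move=> a; apply: val_inj; rewrite /= addNr. Qed.
HB.instance Definition _ :=
  GRing.isZmodule.Build (subgroup_type hG) sg_addA sg_addC sg_add0 sg_addN.
End SubgroupType.

Section GradedSystem.
Variables (B : nuRing) (Bi : int -> B -> Prop).
Hypothesis hgr : grading Bi.

Definition Hom (i : int) := subgroup_type (grade_sub hgr i).
Definition hmk i x (hx : Bi i x) : Hom i := sg_mk (grade_sub hgr i) hx.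
Lemma homP i (a : Hom i) : Bi i (val a). Proof. exact: (@sg_valP _ _ (grade_sub hgr i) a). Qed.
Definition hmul i j k (hk : i + j = k) (a : Hom i) (b : Hom j) : Hom k :=
  hmk (grade_mul hgr hk (homP a) (homP b)).

Lemma val_hom_sum i (I : Type) (l : seq I) (F : I -> Hom i) :
  val (\sum_(c <- l) F c) = \sum_(c <- l) val (F c).
Proof. by apply: (addmap_sum (f := fun a : Hom i => val a)). Qed.

Definition r0_mul : Hom 0 -> Hom 0 -> Hom 0 := hmul (addr0 0).
Lemma r0_mulA x y z : r0_mul x (r0_mul y z) = r0_mul (r0_mul x y) z.
Proof. by apply: val_inj; rewrite /= nr_mulA. Qed.
Lemma r0_mulDl x y z : r0_mul (x + y) z = r0_mul x z + r0_mul y z.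
Proof. by apply: val_inj; rewrite /= nr_mulDl. Qed.
Lemma r0_mulDr x y z : r0_mul x (y + z) = r0_mul x y + r0_mul x z.
Proof. by apply: val_inj; rewrite /= nr_mulDr. Qed.
Definition R0 : nuRing := NuRing r0_mulA r0_mulDl r0_mulDr.

Section DegreeBimodule.
Variable d : int.
Definition hom_l (r : R0) (p : Hom d) : Hom d := hmul (add0r d) r p.
Definition hom_r (p : Hom d) (r : R0) : Hom d := hmul (addr0 d) p r.
Lemma hom_lDr r m n : hom_l r (m + n) = hom_l r m + hom_l r n.
Proof. by apply: val_inj; rewrite /= nr_mulDr. Qed.
Lemma hom_lDl r s m : hom_l (r + s) m = hom_l r m + hom_l s m.
Proof. by apply: val_inj; rewrite /= nr_mulDl. Qed.
Lemma hom_rDl m n r : hom_r (m + n) r = hom_r m r + hom_r n r.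
Proof. by apply: val_inj; rewrite /= nr_mulDl. Qed.
Lemma hom_rDr m r s : hom_r m (r + s) = hom_r m r + hom_r m s.
Proof. by apply: val_inj; rewrite /= nr_mulDr. Qed.
Lemma hom_lA r s m : hom_l (nr_mul r s) m = hom_l r (hom_l s m).
Proof. by apply: val_inj; rewrite /= nr_mulA. Qed.
Lemma hom_rA m r s : hom_r m (nr_mul r s) = hom_r (hom_r m r) s.
Proof. by apply: val_inj; rewrite /= nr_mulA. Qed.
Lemma hom_lr r m s : hom_r (hom_l r m) s = hom_l r (hom_r m s).
Proof. by apply: val_inj; rewrite /= nr_mulA. Qed.
Definition Bmod : bimod R0 := Bimod hom_lDr hom_lDl hom_rDl hom_rDr hom_lA hom_rA hom_lr.
End DegreeBimodule.

Definition psi0 (p : Bmod (-1)) (q : Bmod 1) : R0 := hmul (addNr 1) p q.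
Lemma psi0Dl p p' q : psi0 (p + p') q = psi0 p q + psi0 p' q.
Proof. by apply: val_inj; rewrite /= nr_mulDl. Qed.
Lemma psi0Dr p q q' : psi0 p (q + q') = psi0 p q + psi0 p q'.
Proof. by apply: val_inj; rewrite /= nr_mulDr. Qed.
Lemma psi0_bal p r q : psi0 (bm_r p r) q = psi0 p (bm_l r q).
Proof. by apply: val_inj; rewrite /= nr_mulA. Qed.
Lemma psi0_l r p q : psi0 (bm_l r p) q = nr_mul r (psi0 p q).
Proof. by apply: val_inj; rewrite /= nr_mulA. Qed.
Lemma psi0_r p q r : psi0 p (bm_r q r) = nr_mul (psi0 p q) r.
Proof. by apply: val_inj; rewrite /= nr_mulA. Qed.
Definition X0 : Rsystem R0 := RSystem psi0Dl psi0Dr psi0_bal psi0_l psi0_r.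

Definition incS (p : sP X0) : B := val p.
Definition incT (q : sQ X0) : B := val q.
Definition incR (r : R0) : B := val r.

Lemma inc_covrep : covrep incS incT incR.
Proof. by do !split. Qed.

Lemma val_thetaQP (l : seq (sQ X0 * sP X0)) (q : sQ X0) :
  val (thetaQP l q) = \sum_(c <- l) val c.1 ⋆ (val c.2 ⋆ val q).
Proof. exact: val_hom_sum. Qed.
Lemma val_thetaPQ (l : seq (sP X0 * sQ X0)) (p : sP X0) :
  val (thetaPQ l p) = \sum_(c <- l) (val p ⋆ val c.2) ⋆ val c.1.
Proof. exact: val_hom_sum. Qed.
Lemma prodset_hom_list m n z : prodset (Bi m) (Bi n) z ->
  exists l : seq (Hom m * Hom n), z = \sum_(c <- l) val c.1 ⋆ val c.2.
Proof.
apply: (prodset_ind (G := fun z =>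
  exists l : seq (Hom m * Hom n), z = \sum_(c <- l) val c.1 ⋆ val c.2)).
  split; first by exists [::]; rewrite big_nil.
  move=> x y [l1 ->] [l2 ->]; exists (l1 ++ map (fun c => (- c.1, c.2)) l2).
  rewrite big_cat big_map -sumrN; congr (_ + _); apply: eq_bigr => c _.
  by rewrite /= nmulNr.
by move=> x y hx hy; exists [:: (hmk hx, hmk hy)]; rewrite big_seq1.
Qed.
End GradedSystem.

(* From now on B is unital and strongly graded.  Its identity e lies in B_0
   and has expansions e = sum x_i y_i = sum y'_j x'_j with x_i, x'_j in B_1
   and y_i, y'_j in B_{-1}; these drive the whole forward direction. *)
Section StronglyGradedUnital.
Variables (B : nuRing) (Bi : int -> B -> Prop).
Hypothesis hgr : grading Bi.
Hypothesis hsg : strongly_graded Bi.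
Variable e0 : B.
Hypothesis he0 : is_one e0.

Let Bsub := grade_sub hgr.
Let Bmul := grade_mul hgr.
Local Notation Hom := (Hom hgr).
Local Notation R0 := (R0 hgr).
Local Notation X0 := (X0 hgr).
Local Notation hmk := (hmk hgr).
Local Notation incS := (@incS _ _ hgr).
Local Notation incT := (@incT _ _ hgr).
Local Notation incR := (@incR _ _ hgr).

Definition e : B := comp hgr 0 e0.
Lemma he : is_one e. Proof. exact: unit_comp0. Qed.
Lemma e_deg0 : Bi 0 e. Proof. exact: comp_hom. Qed.
Lemma eL x : e ⋆ x = x. Proof. by case: (he x). Qed.
Lemma eR x : x ⋆ e = x. Proof. by case: (he x). Qed.

Definition expansion i j (l : seq (Hom i * Hom j)) : Prop :=
  e = \sum_(c <- l) val c.1 ⋆ val c.2.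

Lemma expand_unit i j (l : seq (Hom i * Hom j)) (x y : B) : expansion l ->
  \sum_(c <- l) (x ⋆ val c.1) ⋆ (val c.2 ⋆ y) = x ⋆ y.
Proof.
move=> hl; rewrite -{2}(eR x) hl nmul_sumr nmul_suml.
by apply: eq_bigr => c _; rewrite !nr_mulA.
Qed.

Lemma expansion_exists i j : i + j = 0 -> exists l : seq (Hom i * Hom j), expansion l.
Proof. by move=> hij; apply: prodset_hom_list; rewrite hsg hij; apply: e_deg0. Qed.

Definition lx : seq (Hom 1 * Hom (-1)) := proj1_sig (cid _ (expansion_exists (addrN 1))).
Lemma lxP : expansion lx. Proof. exact: proj2_sig (cid _ (expansion_exists (addrN 1))). Qed.
Definition lu : seq (Hom (-1) * Hom 1) := proj1_sig (cid _ (expansion_exists (addNr 1))).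
Lemma luP : expansion lu. Proof. exact: proj2_sig (cid _ (expansion_exists (addNr 1))). Qed.

(* a = e a = sum x_i (y_i a) *)
Lemma expand_left i j (l : seq (Hom i * Hom j)) a : expansion l ->
  a = \sum_(c <- l) val c.1 ⋆ (val c.2 ⋆ a).
Proof.
move=> hl; rewrite -{1}(eL a) -(expand_unit e a hl).
by apply: eq_bigr => c _; rewrite eL.
Qed.

Definition e_R0 : R0 := hmk e_deg0.

Lemma X0_unital : unital_system X0.
Proof.
exists e_R0; split; first by move=> x; split; apply: val_inj; rewrite /= ?eL ?eR.
by split=> p; split; apply: val_inj; rewrite /= ?eL ?eR.
Qed.

Lemma X0_FS' : condFS' X0.
Proof.
split.
  exists lx => q; apply: val_inj; rewrite val_thetaQP.
  by under eq_bigr do rewrite nr_mulA; rewrite -nmul_suml -lxP eL.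
exists (map (fun c => (c.2, c.1)) lx) => p; apply: val_inj.
rewrite val_thetaPQ big_map /=.
by under eq_bigr do rewrite -nr_mulA; rewrite -nmul_sumr -lxP eR.
Qed.

Lemma X0_psi_surjective : psi_surjective X0.
Proof.
move=> r; exists (map (fun c => (bm_l (r : R0) (c.1 : sP X0), c.2)) lu).
apply: val_inj; rewrite val_hom_sum big_map /=.
by under eq_bigr do rewrite -nr_mulA; rewrite -nmul_sumr -luP eR.
Qed.

Lemma eq_of_action_on_B1 x (l : seq (Hom 1 * Hom (-1))) :
  (forall q : Hom 1, x ⋆ val q = \sum_(d <- l) val d.1 ⋆ (val d.2 ⋆ val q)) ->
  x = \sum_(d <- l) val d.1 ⋆ val d.2.
Proof.
move=> H; rewrite -[x in LHS]eR lxP nmul_sumr.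
under eq_bigr do rewrite nr_mulA H nmul_suml.
rewrite exchange_big /=; apply: eq_bigr => d _.
under eq_bigr do rewrite nr_mulA -nr_mulA.
by rewrite -nmul_sumr -lxP eR.
Qed.

Lemma inc_pi_Delta (x : R0) : pi_is incS incT (fun q : sQ X0 => bm_l x q) (incR x).
Proof.
move=> l H; apply: eq_of_action_on_B1 => q.
by rewrite -val_thetaQP -H.
Qed.

Lemma inc_faithful : faithful_rep incS incT incR.
Proof. by move=> x _; apply: inc_pi_Delta. Qed.

Lemma inc_J_relations (J : R0 -> Prop) : J_relations incS incT incR J.
Proof. by move=> x _; apply: inc_pi_Delta. Qed.

(* The whole ring B_0 is psi-compatible (x acts on B_1 as sum theta_{x q_i, p_i})
   and faithful (x B_1 = 0 forces x = x e = 0); so it is the unique maximal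
   psi-compatible faithful ideal. *)
Definition full_ideal : R0 -> Prop := fun _ => True.

Lemma full_ideal_CF : CFideal X0 full_ideal.
Proof.
split; first by split; [split | ].
split.
  move=> x _; exists (map (fun c => (bm_l x (c.1 : sQ X0), c.2)) lx) => q.
  apply: val_inj; rewrite val_thetaQP big_map /=.
  under eq_bigr do rewrite !nr_mulA.
  rewrite -nmul_suml; under eq_bigr do rewrite -nr_mulA.
  by rewrite -nmul_sumr -lxP eR.
move=> x _ H; apply: val_inj.
rewrite /= (eq_of_action_on_B1 (x := val x) (l := [::])) ?big_nil //.
by move=> q; rewrite big_nil; exact: (congr1 val (H q)).
Qed.

Lemma full_ideal_max : maxCFideal X0 full_ideal.
Proof. by split; [exact: full_ideal_CF | ]. Qed.

Lemma X0_CP_well_defined : CP_well_defined X0.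
Proof.
exists full_ideal; split; first exact: full_ideal_max.
by move=> J [_ hmax] x; split=> // _; apply: (hmax _ full_ideal_CF).
Qed.

(* B is generated by B_0, B_1 and B_{-1}: a subring containing them contains
   every B_k, since b = sum x_i (y_i b) and b = sum y'_j (x'_j b). *)
Lemma inc_surjective : surjective_rep incS incT incR.
Proof.
move=> b A [hAs hAm] hgen.
have hom k : forall h, Bi k h -> A h.
  elim/int_ind_sym: k => [|n IH|n IH] h hh.
  - by apply: hgen; left; exists (hmk hh).
  - rewrite (expand_left h lxP); apply: subgroup_sum => // c _; apply: hAm.
      by apply: hgen; right; right; exists c.1.
    by apply: IH; apply: (Bmul _ (homP c.2) hh); lia.
  - rewrite (expand_left h luP); apply: subgroup_sum => // c _; apply: hAm.
      by apply: hgen; right; left; exists c.1.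
    by apply: IH; apply: (Bmul _ (homP c.2) hh); lia.
rewrite -(comp_sum hgr b); apply: subgroup_sum => // i _.
exact: hom (comp_hom hgr i b).
Qed.

Lemma inc_graded : graded_rep incS incT incR Bi.
Proof.
split; first exact: (@inc_covrep _ _ hgr).
split; first exact: inc_surjective.
by split; first exact: hgr; do !split=> *; apply: homP.
Qed.

(* e is a sum of values psi_{n+1}(p (x) q), by iterating e = sum y'_j x'_j:
   e = sum y'_j e x'_j = sum y'_j psi_n(..) x'_j *)
Lemma unit_psi_list n : exists L : seq (seq (sP X0) * seq (sQ X0)),
  (forall c, c \in L -> size c.1 = n.+1 /\ size c.2 = n.+1) /\
  e = \sum_(c <- L) val (psi_list c.1 c.2).
Proof.
elim: n => [|n [L [hL hLe]]].
  exists (map (fun c => ([:: c.1], [:: c.2])) lu); split.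
    by move=> c /mapP [d _ ->].
  by rewrite big_map /= luP.
exists [seq (c.1 :: d.1, c.2 :: d.2) | c <- lu, d <- L]; split.
  by move=> z /allpairsP [[c d] [_ dL ->]] /=; have [-> ->] := hL d dL.
rewrite big_allpairs_dep {1}luP; apply: eq_bigr => c _.
rewrite -[val c.1]eR hLe nmul_sumr nmul_suml; apply: eq_big_seq => d dL.
by have [] := hL d dL; case: d dL => [[|p ps] [|q qs]].
Qed.

(* Semi-fullness: B_{-k}B_k = B_0 by strong grading, and I^(k) = B_0 since
   it is an ideal of B_0 containing e. *)
Lemma inc_semi_full : semi_full X0 incR Bi.
Proof.
move=> k x; apply: (iff_trans (hsg _ _ x)); rewrite addNr; split.
  move=> hx I hI hI0 hIc hgens.
  suff Ie : I e by have := (hIc x e hx Ie).1; rewrite eR.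
  case: k hgens => [|n] hgens.
    by have := hgens (incR (nr_mul e_R0 e_R0)) (ex_intro _ e_R0 (ex_intro _ e_R0 erefl)); rewrite /incR /= eL.
  have [L [hL ->]] := unit_psi_list n.
  apply: (subgroup_sum hI) => c cL; apply: hgens.
  by have [h1 h2] := hL c cL; exists c.1, c.2.
move=> hx; apply: hx.
- exact: Bsub.
- by [].
- by move=> a y ha hy; split; [apply: (Bmul _ ha hy) | apply: (Bmul _ hy ha)].
case: k => [|n] y.
  by move=> [r [r' ->]]; apply: homP.
by move=> [ps [qs [_ [_ ->]]]]; apply: homP.
Qed.

(* We build phi : B -> C with
   phi(b) = sum T2(x_{i_1})...T2(x_{i_n}) sg2(y_{i_n}...y_{i_1} b) on B_n,
   n >= 0 (and symmetrically with S2 on B_{-n}). *)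
Section Universality.
Variables (C : nuRing) (S2 : sP X0 -> C) (T2 : sQ X0 -> C) (sg2 : R0 -> C).
Hypothesis hcov : covrep S2 T2 sg2.
Hypothesis hJ : J_relations S2 T2 sg2 full_ideal.

(* a map on B_i, extended by 0 to all of B *)
Definition liftB i (f : Hom i -> C) (b : B) : C := if insub b is Some a then f a else 0.
Lemma liftB_val i (f : Hom i -> C) (a : Hom i) : liftB f (val a) = f a.
Proof. by rewrite /liftB valK. Qed.
Lemma liftB_mk i (f : Hom i -> C) x (hx : Bi i x) : liftB f x = f (hmk hx).
Proof. exact: (liftB_val f (hmk hx)). Qed.

Definition sgB : B -> C := liftB (i := 0) sg2.
Definition TB : B -> C := liftB (i := 1) T2.
Definition SB : B -> C := liftB (i := -1) S2.

Lemma sgB_add a b : Bi 0 a -> Bi 0 b -> sgB (a + b) = sgB a + sgB b.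
Proof.
move=> ha hb; rewrite /sgB !(liftB_mk _ ha, liftB_mk _ hb) (liftB_mk _ (subgroupD (Bsub 0) ha hb)).
by rewrite -(rep_sg_hom hcov).1; congr sg2; apply: val_inj.
Qed.
Lemma sgB_mul a b : Bi 0 a -> Bi 0 b -> sgB (a ⋆ b) = sgB a ⋆ sgB b.
Proof.
move=> ha hb; rewrite /sgB !(liftB_mk _ ha, liftB_mk _ hb) (liftB_mk _ (Bmul (addr0 0) ha hb)).
by rewrite -(rep_sg_hom hcov).2; congr sg2; apply: val_inj.
Qed.
Lemma TB_add a b : Bi 1 a -> Bi 1 b -> TB (a + b) = TB a + TB b.
Proof.
move=> ha hb; rewrite /TB !(liftB_mk _ ha, liftB_mk _ hb) (liftB_mk _ (subgroupD (Bsub 1) ha hb)).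
by rewrite -(rep_T_add hcov); congr T2; apply: val_inj.
Qed.
Lemma SB_add a b : Bi (-1) a -> Bi (-1) b -> SB (a + b) = SB a + SB b.
Proof.
move=> ha hb; rewrite /SB !(liftB_mk _ ha, liftB_mk _ hb) (liftB_mk _ (subgroupD (Bsub (-1)) ha hb)).
by rewrite -(rep_S_add hcov); congr S2; apply: val_inj.
Qed.
Lemma TB_r a r : Bi 1 a -> Bi 0 r -> TB (a ⋆ r) = TB a ⋆ sgB r.
Proof.
move=> ha hr; rewrite /TB /sgB (liftB_mk _ ha) (liftB_mk _ hr) (liftB_mk _ (Bmul (addr0 1) ha hr)).
by rewrite -(rep_Tr hcov (hmk ha : sQ X0)); congr T2; apply: val_inj.
Qed.
Lemma SB_r a r : Bi (-1) a -> Bi 0 r -> SB (a ⋆ r) = SB a ⋆ sgB r.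
Proof.
move=> ha hr; rewrite /SB /sgB (liftB_mk _ ha) (liftB_mk _ hr) (liftB_mk _ (Bmul (addr0 (-1)) ha hr)).
by rewrite -(rep_Sr hcov (hmk ha : sP X0)); congr S2; apply: val_inj.
Qed.
Lemma TB_l r a : Bi 0 r -> Bi 1 a -> sgB r ⋆ TB a = TB (r ⋆ a).
Proof.
move=> hr ha; rewrite /TB /sgB (liftB_mk _ ha) (liftB_mk _ hr) (liftB_mk _ (Bmul (add0r 1) hr ha)).
by rewrite -(rep_Tl hcov _ (hmk ha : sQ X0)); congr T2; apply: val_inj.
Qed.
Lemma SB_l r a : Bi 0 r -> Bi (-1) a -> sgB r ⋆ SB a = SB (r ⋆ a).
Proof.
move=> hr ha; rewrite /SB /sgB (liftB_mk _ ha) (liftB_mk _ hr) (liftB_mk _ (Bmul (add0r (-1)) hr ha)).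
by rewrite -(rep_Sl hcov _ (hmk ha : sP X0)); congr S2; apply: val_inj.
Qed.
Lemma SB_TB a c : Bi (-1) a -> Bi 1 c -> SB a ⋆ TB c = sgB (a ⋆ c).
Proof.
move=> ha hc; rewrite /SB /TB /sgB (liftB_mk _ ha) (liftB_mk _ hc) (liftB_mk _ (Bmul (addNr 1) ha hc)).
by rewrite -(rep_psi hcov (hmk ha : sP X0) (hmk hc : sQ X0)); congr sg2; apply: val_inj.
Qed.
(* the Cuntz-Pimsner relation sigma(q p) = T(q)S(p) *)
Lemma TB_SB a c : Bi 1 a -> Bi (-1) c -> TB a ⋆ SB c = sgB (a ⋆ c).
Proof.
move=> ha hc; have hac := Bmul (addrN 1) ha hc.
rewrite /SB /TB /sgB (liftB_mk _ ha) (liftB_mk _ hc) (liftB_mk _ hac).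
rewrite (hJ (x := hmk hac : R0) I (l := [:: (hmk ha : sQ X0, hmk hc : sP X0)])) ?big_seq1 //.
by move=> q; apply: val_inj; rewrite val_thetaQP big_seq1 /= nr_mulA.
Qed.

(* The data of one direction (positive or negative degrees): the expansion L
   of e through B_dd B_dd', the map U on B_dd and V on B_dd', satisfying the
   covariance relations, and deg k = k * dd. *)
Record ladder (dd dd' : int) (deg : nat -> int) (L : seq (Hom dd * Hom dd'))
    (U V : B -> C) : Prop := Ladder {
  ld_sum : dd + dd' = 0;
  ld_deg0 : deg 0 = 0;
  ld_degS k : dd' + deg k.+1 = deg k;
  ld_exp : expansion L;
  ld_add a b : Bi dd a -> Bi dd b -> U (a + b) = U a + U b;
  ld_r a r : Bi dd a -> Bi 0 r -> U (a ⋆ r) = U a ⋆ sgB r;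
  ld_l r a : Bi 0 r -> Bi dd a -> sgB r ⋆ U a = U (r ⋆ a);
  ld_VU a c : Bi dd' a -> Bi dd c -> V a ⋆ U c = sgB (a ⋆ c) }.

Lemma T_ladder : ladder (fun k => k%:Z) lx TB SB.
Proof.
split=> //; [lia | exact: lxP | exact: TB_add | exact: TB_r | exact: TB_l | exact: SB_TB].
Qed.

Lemma S_ladder : ladder (fun k => - k%:Z) lu SB TB.
Proof.
split=> //; [lia | exact: luP | exact: SB_add | exact: SB_r | exact: SB_l | exact: TB_SB].
Qed.

Section Ladder.
Variables (dd dd' : int) (deg : nat -> int) (L : seq (Hom dd * Hom dd')) (U V : B -> C).
Hypothesis hl : ladder deg L U V.

(* phi on B_{deg k}: peel off one factor U(x_i) per step, then apply sigma *)
Fixpoint ladder_map (k : nat) (b : B) : C :=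
  if k is k'.+1 then \sum_(c <- L) U (val c.1) ⋆ ladder_map k' (val c.2 ⋆ b) else sgB b.

Lemma ladder_step_deg k (c : Hom dd * Hom dd') b : Bi (deg k.+1) b -> Bi (deg k) (val c.2 ⋆ b).
Proof. exact: (Bmul (ld_degS hl k) (homP c.2)). Qed.

Lemma ladder_add k a b : Bi (deg k) a -> Bi (deg k) b ->
  ladder_map k (a + b) = ladder_map k a + ladder_map k b.
Proof.
elim: k a b => [|k IH] a b ha hb /=; first by rewrite (ld_deg0 hl) in ha hb; apply: sgB_add.
rewrite -big_split; apply: eq_bigr => c _ /=.
by rewrite nr_mulDr IH ?nr_mulDr //; apply: ladder_step_deg.
Qed.

Lemma ladder_sum k (I : eqType) (l : seq I) (F : I -> B) :
  (forall i, Bi (deg k) (F i)) ->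
  ladder_map k (\sum_(i <- l) F i) = \sum_(i <- l) ladder_map k (F i).
Proof.
move=> hF; have h0 : ladder_map k 0 = 0.
  by apply: (addIr (ladder_map k 0)); rewrite -ladder_add ?add0r //; apply: subgroup0.
elim: l => [|a l IH]; first by rewrite !big_nil h0.
by rewrite !big_cons ladder_add ?IH //; apply: (subgroup_sum (Bsub _)).
Qed.

Lemma U_sum (I : eqType) (l : seq I) (F : I -> B) :
  (forall i, Bi dd (F i)) -> U (\sum_(i <- l) F i) = \sum_(i <- l) U (F i).
Proof.
move=> hF; have U0 : U 0 = 0.
  by apply: (addIr (U 0)); rewrite -(ld_add hl) ?add0r //; apply: subgroup0.
elim: l => [|a l IH]; first by rewrite !big_nil U0.
by rewrite !big_cons (ld_add hl) ?IH //; apply: (subgroup_sum (Bsub _)).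
Qed.

(* U(a) = sum U(x_i) sigma(y_i a), from a = sum x_i (y_i a) *)
Lemma U_expand a : Bi dd a -> U a = \sum_(c <- L) U (val c.1) ⋆ sgB (val c.2 ⋆ a).
Proof.
move=> ha; have h0 (c : Hom dd * Hom dd') : Bi 0 (val c.2 ⋆ a).
  by apply: (Bmul _ (homP c.2) ha); rewrite addrC (ld_sum hl).
rewrite {1}(expand_left a (ld_exp hl)) U_sum.
  by apply: eq_bigr => c _; rewrite (ld_r hl) //; apply: homP.
by move=> c; apply: (Bmul _ (homP c.1) (h0 c)); rewrite addr0.
Qed.

Lemma ladder_sg k r b : Bi 0 r -> Bi (deg k) b ->
  ladder_map k (r ⋆ b) = sgB r ⋆ ladder_map k b.
Proof.
elim: k r b => [|k IH] r b hr hb /=; first by rewrite (ld_deg0 hl) in hb; apply: sgB_mul.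
have hrc (c : Hom dd * Hom dd') : Bi dd (r ⋆ val c.1) by apply: (Bmul (add0r dd) hr (homP c.1)).
have hd0 (c d : Hom dd * Hom dd') : Bi 0 (val d.2 ⋆ (r ⋆ val c.1)).
  by apply: (Bmul _ (homP d.2) (hrc c)); rewrite addrC (ld_sum hl).
have E (c : Hom dd * Hom dd') : sgB r ⋆ (U (val c.1) ⋆ ladder_map k (val c.2 ⋆ b)) =
   \sum_(d <- L) U (val d.1) ⋆ ladder_map k ((val d.2 ⋆ (r ⋆ val c.1)) ⋆ (val c.2 ⋆ b)).
  rewrite nr_mulA (ld_l hl hr (homP c.1)) (U_expand (hrc c)) nmul_suml.
  by apply: eq_bigr => d _; rewrite -nr_mulA (IH _ _ (hd0 c d) (ladder_step_deg _ hb)).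
rewrite nmul_sumr (eq_bigr _ (fun c _ => E c)) exchange_big /=.
apply: eq_bigr => d _; rewrite -nmul_sumr -ladder_sum.
  by under eq_bigr do rewrite (nr_mulA (val d.2) r); rewrite (expand_unit _ _ (ld_exp hl)) nr_mulA.
move=> c; apply: (Bmul _ (hd0 c d) (ladder_step_deg _ hb)); exact: add0r.
Qed.

Lemma ladder_U k a b : Bi dd a -> Bi (deg k) b ->
  ladder_map k.+1 (a ⋆ b) = U a ⋆ ladder_map k b.
Proof.
move=> ha hb /=; rewrite (U_expand ha) nmul_suml; apply: eq_bigr => c _.
rewrite nr_mulA ladder_sg ?nr_mulA //.
by apply: (Bmul _ (homP c.2) ha); rewrite addrC (ld_sum hl).
Qed.

Lemma ladder_V k a b : Bi dd' a -> Bi (deg k.+1) b ->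
  ladder_map k (a ⋆ b) = V a ⋆ ladder_map k.+1 b.
Proof.
move=> ha hb /=; rewrite nmul_sumr.
have hac (c : Hom dd * Hom dd') : Bi 0 (a ⋆ val c.1) by apply: (Bmul _ ha (homP c.1)); rewrite addrC (ld_sum hl).
have E (c : Hom dd * Hom dd') : V a ⋆ (U (val c.1) ⋆ ladder_map k (val c.2 ⋆ b)) =
    ladder_map k ((a ⋆ val c.1) ⋆ (val c.2 ⋆ b)).
  by rewrite nr_mulA (ld_VU hl ha (homP c.1)) (ladder_sg (hac c) (ladder_step_deg _ hb)).
rewrite (eq_bigr _ (fun c _ => E c)) -ladder_sum ?(expand_unit _ _ (ld_exp hl)) //.
by move=> c; apply: (Bmul (add0r _) (hac c) (ladder_step_deg _ hb)).
Qed.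
End Ladder.

Definition phi_deg (k : int) : B -> C :=
  match k with Posz n => ladder_map lx TB n | Negz n => ladder_map lu SB n.+1 end.
Lemma phi_deg_pos (n : nat) : phi_deg n = ladder_map lx TB n. Proof. by []. Qed.
Lemma phi_deg_neg (n : nat) : phi_deg (- n%:Z) = ladder_map lu SB n. Proof. by case: n. Qed.

Lemma int_sign (k : int) : exists n : nat, k = n \/ k = - n%:Z.
Proof. by case: k => n; [exists n; left | exists n.+1; right; rewrite NegzE]. Qed.

Lemma phi_deg_add k a b : Bi k a -> Bi k b -> phi_deg k (a + b) = phi_deg k a + phi_deg k b.
Proof.
have [n [->|->]] := int_sign k => ha hb.
  by rewrite phi_deg_pos (ladder_add T_ladder ha hb).
by rewrite !phi_deg_neg (ladder_add S_ladder ha hb).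
Qed.

Lemma phi_deg0 k : phi_deg k 0 = 0.
Proof.
apply: (addIr (phi_deg k 0)); rewrite -phi_deg_add ?add0r //.
all: exact: subgroup0.
Qed.

Lemma phi_deg_sum k (I : eqType) (l : seq I) (F : I -> B) :
  (forall i, Bi k (F i)) -> phi_deg k (\sum_(i <- l) F i) = \sum_(i <- l) phi_deg k (F i).
Proof.
have [n [->|->]] := int_sign k => hF.
  by rewrite phi_deg_pos (ladder_sum T_ladder).
by rewrite !phi_deg_neg (ladder_sum S_ladder).
Qed.

Lemma phi_deg_sg k r b : Bi 0 r -> Bi k b -> phi_deg k (r ⋆ b) = sgB r ⋆ phi_deg k b.
Proof.
have [n [->|->]] := int_sign k => hr hb.
  by rewrite phi_deg_pos (ladder_sg T_ladder hr hb).
by rewrite !phi_deg_neg (ladder_sg S_ladder hr hb).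
Qed.

Lemma phi_deg_T k q b : Bi 1 q -> Bi k b -> phi_deg (k + 1) (q ⋆ b) = TB q ⋆ phi_deg k b.
Proof.
have [n [->|->]] := int_sign k => hq hb.
  by rewrite -PoszD addn1 !phi_deg_pos (ladder_U T_ladder hq hb).
case: n hb => [|m] hb.
  change (phi_deg (Posz 1) (q ⋆ b) = TB q ⋆ phi_deg (Posz 0) b).
  by rewrite !phi_deg_pos (ladder_U T_ladder hq hb).
have -> : - (m.+1)%:Z + 1 = - m%:Z by lia.
by rewrite !phi_deg_neg (ladder_V S_ladder hq hb).
Qed.

Lemma phi_deg_S k p b : Bi (-1) p -> Bi k b -> phi_deg (k - 1) (p ⋆ b) = SB p ⋆ phi_deg k b.
Proof.
have [n [->|->]] := int_sign k => hp hb.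
  case: n hb => [|m] hb.
    change (phi_deg (- Posz 1) (p ⋆ b) = SB p ⋆ phi_deg (- Posz 0) b).
    have hb' : Bi (- Posz 0) b by rewrite oppr0.
    by rewrite !phi_deg_neg (ladder_U S_ladder hp hb').
  have -> : (m.+1)%:Z - 1 = m by lia.
  by rewrite !phi_deg_pos (ladder_V T_ladder hp hb).
have -> : - n%:Z - 1 = - (n.+1)%:Z by lia.
by rewrite !phi_deg_neg (ladder_U S_ladder hp hb).
Qed.

(* multiplicativity on homogeneous elements, by induction on the degree of a
   using a = sum x_i (y_i a) (positive degrees) or a = sum y'_j (x'_j a) *)
Lemma phi_deg_mul m : forall a n b, Bi m a -> Bi n b ->
  phi_deg (m + n) (a ⋆ b) = phi_deg m a ⋆ phi_deg n b.
Proof.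
elim/int_ind_sym: m => [|k IH|k IH] a n b ha hb.
- by rewrite add0r phi_deg_sg.
- have hca (c : Hom 1 * Hom (-1)) : Bi k (val c.2 ⋆ a).
    by apply: (Bmul _ (homP c.2) ha); lia.
  rewrite {1}(expand_left a lxP) nmul_suml phi_deg_sum; last first.
    by move=> c; apply: (Bmul _ (Bmul _ (homP c.1) (hca c)) hb); [reflexivity | lia].
  rewrite phi_deg_pos /= nmul_suml; apply: eq_bigr => c _.
  rewrite -nr_mulA (_ : (k.+1)%:Z + n = (k%:Z + n) + 1); last by lia.
  by rewrite (phi_deg_T (homP c.1) (Bmul (erefl _) (hca c) hb)) (IH _ _ _ (hca c) hb) nr_mulA.
- have hca (c : Hom (-1) * Hom 1) : Bi (- k%:Z) (val c.2 ⋆ a).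
    by apply: (Bmul _ (homP c.2) ha); lia.
  rewrite {1}(expand_left a luP) nmul_suml phi_deg_sum; last first.
    by move=> c; apply: (Bmul _ (Bmul _ (homP c.1) (hca c)) hb); [reflexivity | lia].
  rewrite phi_deg_neg /= nmul_suml; apply: eq_bigr => c _.
  rewrite -nr_mulA (_ : - (k.+1)%:Z + n = (- k%:Z + n) - 1); last by lia.
  by rewrite (phi_deg_S (homP c.1) (Bmul (erefl _) (hca c) hb)) (IH _ _ _ (hca c) hb) phi_deg_neg nr_mulA.
Qed.

Definition phi (b : B) : C := \sum_(i <- support hgr b) phi_deg i (comp hgr i b).

Lemma phi_sum_over b (u : seq int) : uniq u -> {subset support hgr b <= u} ->
  phi b = \sum_(i <- u) phi_deg i (comp hgr i b).
Proof.
move=> uu su; rewrite /phi -(sum_extend _ (support_uniq hgr b) uu su).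
by apply: eq_bigr => i _; case: ifP => // /negbT h; rewrite comp_out ?phi_deg0.
Qed.

Lemma phi_hom n h : Bi n h -> phi h = phi_deg n h.
Proof.
move=> hh; set u := undup (n :: support hgr h).
rewrite (@phi_sum_over h u) ?undup_uniq //; last by move=> i ih; rewrite mem_undup inE ih orbT.
rewrite (eq_bigr (fun i => if i \in [:: n] then phi_deg i h else 0)); last first.
  by move=> i _; rewrite (comp_homog hgr hh) inE; case: eqP => // _; rewrite phi_deg0.
have nu : {subset [:: n] <= u} by move=> i; rewrite inE => /eqP ->; rewrite mem_undup inE eqxx.
by rewrite sum_extend ?big_seq1 ?undup_uniq.
Qed.

Lemma phi_add : addmap phi.
Proof.
move=> a b; set u := undup (support hgr a ++ support hgr b ++ support hgr (a + b)).
have uu : uniq u by apply: undup_uniq.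
rewrite (@phi_sum_over a u uu); last by move=> i ih; rewrite mem_undup !mem_cat ih.
rewrite (@phi_sum_over b u uu); last by move=> i ih; rewrite mem_undup !mem_cat ih orbT.
rewrite (@phi_sum_over (a + b) u uu); last by move=> i ih; rewrite mem_undup !mem_cat ih !orbT.
by rewrite -big_split; apply: eq_bigr => i _; rewrite comp_add (phi_deg_add (comp_hom hgr i a) (comp_hom hgr i b)).
Qed.

Lemma phi_mul a b : phi (a ⋆ b) = phi a ⋆ phi b.
Proof.
have phi_comps c : phi c = \sum_(i <- support hgr c) phi (comp hgr i c).
  by apply: eq_bigr => i _; rewrite (phi_hom (comp_hom hgr i c)).
rewrite [in RHS](phi_comps a) [in RHS](phi_comps b) nmul_suml.
rewrite -[a in LHS](comp_sum hgr a) -[b in LHS](comp_sum hgr b) nmul_suml (addmap_sum phi_add).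
apply: eq_bigr => i _; rewrite nmul_sumr (addmap_sum phi_add) nmul_sumr.
apply: eq_bigr => j _; have [hi hj] := (comp_hom hgr i a, comp_hom hgr j b).
by rewrite (phi_hom hi) (phi_hom hj) -(phi_deg_mul hi hj); apply: phi_hom; apply: grade_mul.
Qed.

Lemma phi_universal : ringhom phi /\
  (forall p, phi (incS p) = S2 p) /\ (forall q, phi (incT q) = T2 q) /\
  (forall r, phi (incR r) = sg2 r).
Proof.
split; first by split; [exact: phi_add | exact: phi_mul].
split.
  move=> p; rewrite /incS (phi_hom (homP p)) -[- 1]/(- Posz 1) phi_deg_neg /=.
  by rewrite -(U_expand S_ladder (homP p)) /SB liftB_val.
split.
  move=> q; rewrite /incT (phi_hom (homP q)) -[1]/(Posz 1) phi_deg_pos /=.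
  by rewrite -(U_expand T_ladder (homP q)) /TB liftB_val.
by move=> r; rewrite /incR (phi_hom (homP r)) /= /sgB liftB_val.
Qed.
End Universality.

Lemma inc_CP_rep : CP_rep incS incT incR Bi.
Proof.
exists full_ideal; split; first exact: full_ideal_max.
split; first exact: inc_graded.
split; first exact: inc_J_relations.
by move=> C S2 T2 sg2 hcov hJ; eexists; apply: (phi_universal hcov hJ).
Qed.
End StronglyGradedUnital.

Unset Implicit Arguments.

Theorem mainTheorem3 (R : nuRing) (X : Rsystem R)
    (hFS : condFS X) (hwd : CP_well_defined X)
    (B : nuRing) (S : sP X -> B) (T : sQ X -> B) (sg : R -> B)
    (Bi : int -> B -> Prop) (hCP : CP_rep S T sg Bi) :
  (unital_ring B /\ strongly_graded Bi) <->
  (exists (R' : nuRing) (X' : Rsystem R'),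
     CP_well_defined X' /\
     unital_system X' /\
     condFS' X' /\
     psi_surjective X' /\
     exists (B' : nuRing) (S' : sP X' -> B') (T' : sQ X' -> B') (sg' : R' -> B')
            (Bi' : int -> B' -> Prop),
       CP_rep S' T' sg' Bi' /\ semi_full X' sg' Bi' /\ faithful_rep S' T' sg' /\
       graded_iso Bi Bi').
Proof.
have [_ [_ [[_ [_ [hgr _]]] _]]] := hCP.
split.
- (* B itself is the Cuntz-Pimsner ring of (B_{-1}, B_1, mult.) over B_0 *)
  move=> [[e0 he0] hsg].
  exists (R0 hgr), (X0 hgr).
  split; first exact: (X0_CP_well_defined hgr hsg he0).
  split; first exact: (X0_unital hgr he0).
  split; first exact: (X0_FS' hgr hsg he0).
  split; first exact: (@X0_psi_surjective _ _ hgr hsg _ he0).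
  exists B, (@incS _ _ hgr), (@incT _ _ hgr), (@incR _ _ hgr), Bi.
  split; first exact: (inc_CP_rep hgr hsg he0).
  split; first exact: (inc_semi_full hgr hsg he0).
  split; first exact: (@inc_faithful _ _ hgr hsg _ he0).
  by exists id; split; [split | split; [exists id | ]].
- move=> [R' [X' [_ [hu [hfs [hps [B' [S' [T' [sg' [Bi' [hCP' [_ [hf hiso]]]]]]]]]]]]]].
  apply: (graded_iso_reflect hgr hiso).
  have [_ [_ [hgr' _]]] := hCP'.
  exact: (CP_unital_strongly_graded hu hfs hps hgr' hf).
Qed.
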